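(* Let $0<\beta\le1$ and let $x$ be real with $0\le\frac{(1+\beta)^2x}{4\beta}<1$. Then $$\lim_{t\to\infty}{}_3F_2\!\left(\begin{matrix}1,\ t\frac{1+\beta}{2}+1,\ t\frac{1+\beta}{2}+\frac12\\ t+1,\ t\beta+1\end{matrix};x\right)=\frac{1}{1-\frac{(1+\beta)^2x}{4\beta}},$$ uniformly on compact subsets of this region.
   Context: ${}_3F_2\!\left(\begin{matrix}a,b,c\\ d,e\end{matrix};x\right)=\sum_{n\ge0}\frac{(a)_n(b)_n(c)_n}{(d)_n(e)_n}\frac{x^n}{n!}$ for $|x|<1$, with $(q)_0=1$, $(q)_n=q(q+1)\cdots(q+n-1)$; $t>0$ is a real parameter tending to $\infty$. *)

From HB Require Import structures.
From mathcomp Require Import all_boot all_order all_algebra.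
From mathcomp Require Import all_classical all_reals all_analysis.
Set Implicit Arguments. Unset Strict Implicit. Unset Printing Implicit Defensive.
Import Order.TTheory GRing.Theory Num.Theory.
Import numFieldNormedType.Exports.
Local Open Scope ring_scope.

Definition poch {R : realType} (q : R) (n : nat) : R :=
  \prod_(i < n) (q + i%:R).

Definition hyp3F2_term {R : realType} (a b c d e x : R) (n : nat) : R :=
  (poch a n * poch b n * poch c n) / (poch d n * poch e n) * x ^+ n / (n`!)%:R.

Definition hyp3F2 {R : realType} (a b c d e x : R) : R :=
  limn (series (hyp3F2_term a b c d e x)).

(* Since the first numerator parameter is 1, the terms a_n of the series obey
   a_(n+1) = a_n r_n(t), and the ratios r_n(t) never exceed their common limit
   z = (1+beta)^2 x / (4 beta) as t -> oo, while z - r_n(t) = O(n^2 / (t beta)).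
   Hence 0 <= a_n <= z^n, the sum lies below 1/(1-z), and z^n - a_n is at most
   the sum of the first n defects z - r_k(t).  Cutting 1/(1-z) - sum a_n at an
   index N bounds the error by z^N/(1-z) + O(N^4 / (t beta)).  On a compact
   subset of the region beta is bounded below and z is bounded away from 1, so
   one chooses N first and then t. *)

From HB Require Import structures.
From mathcomp Require Import all_boot all_order all_algebra.
From mathcomp Require Import all_classical all_reals all_analysis.
From mathcomp Require Import ring lra.
Set Implicit Arguments. Unset Strict Implicit. Unset Printing Implicit Defensive.
Import Order.TTheory GRing.Theory Num.Theory.
Import numFieldNormedType.Exports.
Local Open Scope classical_set_scope.
Local Open Scope ring_scope.

Lemma series_exprE (R : realType) (z : R) n : z != 1 ->
  series (GRing.exp z) n = (1 - z ^+ n) / (1 - z).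
Proof. by move=> z1; rewrite exprn_geometric geometric_seriesE //= !mul1r. Qed.

Section RatioSeries.
Variables (R : realType) (a r : nat -> R) (z : R).
Hypotheses (a0 : a 0 = 1) (aS : forall n, a n.+1 = a n * r n).
Hypotheses (r_ge0 : forall n, 0 <= r n) (r_le : forall n, r n <= z) (z_lt1 : z < 1).

Let z_ge0 : 0 <= z. Proof. exact: le_trans (r_ge0 0) (r_le 0). Qed.
Let z_neq1 : z != 1. Proof. by rewrite lt_eqF. Qed.

Lemma ratio_seq_bounds n : 0 <= a n <= z ^+ n.
Proof.
elim: n => [|n /andP[an0 anz]]; first by rewrite a0 expr0 lexx ler01.
by rewrite aS exprSr mulr_ge0 //= ler_pM.
Qed.

Lemma series_ratio_nondecreasing : nondecreasing_seq (series a).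
Proof.
move=> m n mn; apply: (nondecreasing_series (P := xpredT)) => // k _ _.
by case/andP: (ratio_seq_bounds k).
Qed.

Lemma series_ratio_le n : series a n <= (1 - z)^-1.
Proof.
apply: (@le_trans _ _ (series (GRing.exp z) n)).
  by apply: ler_sum_nat => k _; case/andP: (ratio_seq_bounds k).
rewrite series_exprE // -[X in _ <= X]mul1r ler_wpM2r ?invr_ge0 ?subr_ge0 ?(ltW z_lt1) //.
by rewrite gerBl exprn_ge0.
Qed.

Lemma is_cvg_series_ratio : cvgn (series a).
Proof.
apply: nondecreasing_is_cvgn; first exact: series_ratio_nondecreasing.
by exists (1 - z)^-1 => _ [n _ <-]; exact: series_ratio_le.
Qed.

Lemma lim_series_ratio_le : limn (series a) <= (1 - z)^-1.
Proof.
apply: limr_le; first exact: is_cvg_series_ratio.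
by apply: nearW; exact: series_ratio_le.
Qed.

Lemma exprn_sub_ratio_seq n : z ^+ n - a n <= \sum_(k < n) (z - r k).
Proof.
elim: n => [|n IH]; first by rewrite a0 expr0 subrr big_ord0.
have [an0 anz] := andP (ratio_seq_bounds n).
have -> : z ^+ n.+1 - a n.+1 = (z ^+ n - a n) * r n + z ^+ n * (z - r n).
  by rewrite aS exprSr; ring.
rewrite big_ord_recr /=; apply: lerD.
  apply: le_trans IH; apply: ler_piMr; first by rewrite subr_ge0.
  exact: le_trans (r_le n) (ltW z_lt1).
by apply: ler_piMl; [rewrite subr_ge0 | exact: exprn_ile1 (ltW z_lt1)].
Qed.

Lemma lim_series_ratio_dist N d : (forall k, (k < N)%N -> z - r k <= d) ->
  `|limn (series a) - (1 - z)^-1| <= z ^+ N / (1 - z) + N%:R ^+ 2 * d.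
Proof.
move=> rd.
rewrite ler0_norm ?subr_le0 ?lim_series_ratio_le // opprB.
have lim_ge := nondecreasing_cvgn_le series_ratio_nondecreasing is_cvg_series_ratio N.
apply: le_trans (lerB (lexx _) lim_ge) _.
have -> : (1 - z)^-1 - series a N = z ^+ N / (1 - z) + \sum_(0 <= k < N) (z ^+ k - a k).
  rewrite sumrB -[X in _ = _ + (X - _)]/(series (GRing.exp z) N) series_exprE //.
  by rewrite /series /=; field; rewrite subr_eq0 eq_sym.
have -> : N%:R ^+ 2 * d = \sum_(0 <= k < N) (N%:R * d).
  by rewrite sumr_const_nat subn0 expr2 -mulrA mulr_natl.
rewrite lerD2l.
apply: ler_sum_nat => k /= kN.
apply: le_trans (exprn_sub_ratio_seq k) _.
have d0 : 0 <= d by apply: le_trans (rd 0%N (leq_ltn_trans (leq0n k) kN)); rewrite subr_ge0.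
apply: (@le_trans _ _ (k%:R * d)).
  rewrite mulr_natl -[X in d *+ X]card_ord -sumr_const.
  by apply: ler_sum => i _; apply: rd; exact: ltn_trans (ltn_ord i) kN.
by rewrite mulr_natl -mulr_natl ler_wpM2r // ler_nat ltnW.
Qed.

End RatioSeries.

Section Pochhammer.
Variable R : realType.

Lemma poch0 (q : R) : poch q 0 = 1.
Proof. by rewrite /poch big_ord0. Qed.

Lemma pochS (q : R) n : poch q n.+1 = poch q n * (q + n%:R).
Proof. by rewrite /poch big_ord_recr. Qed.

Lemma poch1 n : poch (1 : R) n = n`!%:R.
Proof. by elim: n => [|n IH]; rewrite ?poch0 // pochS IH factS natrM mulrC addrC natr1. Qed.

Lemma poch_neq0 (q : R) n : (forall i, q + i%:R != 0) -> poch q n != 0.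
Proof. by move=> qi; apply/prodf_neq0 => i _. Qed.

Lemma hyp3F2_term1E (b c d e x : R) n :
  hyp3F2_term 1 b c d e x n = poch b n * poch c n / (poch d n * poch e n) * x ^+ n.
Proof.
have fact_neq0 : n`!%:R != 0 :> R by rewrite pnatr_eq0 -lt0n fact_gt0.
by rewrite /hyp3F2_term poch1 -[RHS](mulfK fact_neq0); congr (_ / _); ring.
Qed.

Lemma hyp3F2_term1S (b c d e x : R) n :
  (forall i, d + i%:R != 0) -> (forall i, e + i%:R != 0) ->
  hyp3F2_term 1 b c d e x n.+1 = hyp3F2_term 1 b c d e x n *
    ((b + n%:R) * (c + n%:R) / ((d + n%:R) * (e + n%:R)) * x).
Proof.
move=> dn0 en0; rewrite !hyp3F2_term1E !pochS exprSr.
by field; rewrite !poch_neq0 ?dn0 ?en0.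
Qed.

End Pochhammer.

Section TermRatio.
Variable R : realType.
Implicit Types (be x t : R) (n : nat).

Definition limit_ratio be x : R := (1 + be) ^+ 2 * x / (4 * be).

Definition term_ratio be x t n : R :=
  (t * ((1 + be) / 2) + 1 + n%:R) * (t * ((1 + be) / 2) + 2^-1 + n%:R) /
    ((t + 1 + n%:R) * (t * be + 1 + n%:R)) * x.

Lemma limit_ratio_ge0 be x : 0 < be -> (0 <= limit_ratio be x) = (0 <= x).
Proof.
by move=> be0; rewrite /limit_ratio mulrAC pmulr_rge0 // divr_gt0 ?mulr_gt0 //; lra.
Qed.

Lemma term_ratio_ge0 be x t n : 0 < be -> 0 <= t -> 0 <= x -> 0 <= term_ratio be x t n.
Proof.
move=> be0 t0 x0; have n0 : 0 <= n%:R :> R by [].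
by rewrite /term_ratio mulr_ge0 // divr_ge0 // mulr_ge0 //; nra.
Qed.

Lemma term_ratio_le be x t n : 0 < be <= 1 -> 0 < t -> 0 <= x ->
  term_ratio be x t n <= limit_ratio be x.
Proof.
move=> /andP[be0 be1] t0 x0; have n0 : 0 <= n%:R :> R by [].
have D0 : 0 < (t + 1 + n%:R) * (t * be + 1 + n%:R) by apply: mulr_gt0; nra.
rewrite /term_ratio /limit_ratio [X in _ <= X]mulrAC ler_wpM2r //.
rewrite ler_pdivrMr // mulrAC ler_pdivlMr ?mulr_gt0 //.
pose s : R := 1 + n%:R.
rewrite -subr_ge0.
have -> : (1 + be) ^+ 2 * ((t + 1 + n%:R) * (t * be + 1 + n%:R)) -
  (t * ((1 + be) / 2) + 1 + n%:R) * (t * ((1 + be) / 2) + 2^-1 + n%:R) * (4 * be)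
  = (1 - be) ^+ 2 * (t * s * (1 + be) + s ^+ 2) + 2 * be * (t * ((1 + be) / 2) + s).
  by rewrite /s; field.
rewrite addr_ge0 ?mulr_ge0 ?exprn_ge0 //; rewrite /s; nra.
Qed.

Lemma limit_sub_term_ratio_le be x t n : 0 < be <= 1 -> 1 <= t -> 0 <= x ->
  limit_ratio be x - term_ratio be x t n <=
    limit_ratio be x * ((n%:R + 1) * (n%:R + 3) / (t * be)).
Proof.
move=> /andP[be0 be1] t1 x0.
have t0 : 0 < t by lra.
have n0 : 0 <= n%:R :> R by [].
have tb0 : 0 < t ^+ 2 * be by rewrite mulr_gt0 ?exprn_gt0.
have z0 : 0 <= limit_ratio be x by rewrite limit_ratio_ge0.
set P := (t + 1 + n%:R) * (t * be + 1 + n%:R).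
have P0 : 0 < P by rewrite /P mulr_gt0; nra.
have PD : P - t ^+ 2 * be = (1 + n%:R) * (t * be + t + 1 + n%:R) by rewrite /P; ring.
have term_ge : limit_ratio be x * (t ^+ 2 * be / P) <= term_ratio be x t n.
  have -> : limit_ratio be x * (t ^+ 2 * be / P) = t ^+ 2 * ((1 + be) / 2) ^+ 2 / P * x.
    by rewrite /limit_ratio; field; rewrite !gt_eqF.
  rewrite /term_ratio -/P ler_wpM2r // ler_pM2r ?invr_gt0 //; nra.
have defect_le : 1 - t ^+ 2 * be / P <= (n%:R + 1) * (n%:R + 3) / (t * be).
  have -> : 1 - t ^+ 2 * be / P = (P - t ^+ 2 * be) / P by field; rewrite gt_eqF.
  have -> : (n%:R + 1) * (n%:R + 3) / (t * be) = (1 + n%:R) * ((n%:R + 3) * t) / (t ^+ 2 * be).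
    by field; rewrite !gt_eqF.
  rewrite PD; apply: (@le_trans _ _ ((1 + n%:R) * (t * be + t + 1 + n%:R) / (t ^+ 2 * be))).
    have tbe0 : 0 <= t * be by rewrite mulr_ge0 ?ltW.
    have Q0 : 0 <= t * be + t + 1 + n%:R by lra.
    rewrite ler_wpM2l ?mulr_ge0 ?lef_pV2 ?posrE //.
    by rewrite -subr_ge0 PD; apply: mulr_ge0; lra.
  rewrite ler_pM2r ?invr_gt0 //; apply: ler_wpM2l; first lra.
  have : t * be <= t by apply: ler_piMr; lra.
  have : n%:R <= n%:R * t by exact: ler_peMr.
  lra.
apply: le_trans (_ : _ <= limit_ratio be x * (1 - t ^+ 2 * be / P)) _.
  by rewrite mulrBr mulr1 lerB.
exact: ler_wpM2l.
Qed.

End TermRatio.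

Lemma hyp3F2_limit_dist (R : realType) (be x t : R) (N : nat) :
  0 < be <= 1 -> 0 <= x -> limit_ratio be x < 1 -> 1 <= t ->
  `| hyp3F2 1 (t * ((1 + be) / 2) + 1) (t * ((1 + be) / 2) + 2^-1)
            (t + 1) (t * be + 1) x - (1 - limit_ratio be x)^-1 |
  <= limit_ratio be x ^+ N / (1 - limit_ratio be x) +
     N%:R ^+ 2 * (N%:R * (N%:R + 2) / (t * be)).
Proof.
move=> /andP[be0 be1] x0 z1 t1.
have t0 : 0 < t by lra.
have tbe0 : 0 < t * be by rewrite mulr_gt0.
apply: (@lim_series_ratio_dist R _ (term_ratio be x t)) => [|n|n|n|//|k kN].
- by rewrite hyp3F2_term1E !poch0 expr0 !(mul1r, invr1).
- by apply: hyp3F2_term1S => i; rewrite gt_eqF //; have : 0 <= i%:R :> R by []; lra.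
- exact: term_ratio_ge0 (ltW t0) x0.
- by apply: term_ratio_le; rewrite ?be0.
apply: le_trans (limit_sub_term_ratio_le k _ t1 x0) _; first by rewrite be0.
have k0 : 0 <= k%:R :> R by [].
have k1N : k%:R + 1 <= N%:R :> R by rewrite natr1 ler_nat.
apply: le_trans (ler_piMl _ (ltW z1)) _.
  by rewrite divr_ge0 ?mulr_ge0 ?ltW.
by apply: ler_wpM2r; [rewrite invr_ge0 ltW | apply: ler_pM; lra].
Qed.

Lemma geometric_tail_le (R : realType) (z q : R) N : 0 <= z -> z <= q -> q < 1 ->
  z ^+ N / (1 - z) <= q ^+ N / (1 - q).
Proof.
move=> z0 zq q1.
have z1 : z < 1 := le_lt_trans zq q1.
apply: ler_pM; rewrite ?exprn_ge0 ?invr_ge0 ?subr_ge0 ?(ltW z1) //.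
  by rewrite lerXn2r ?nnegrE //; exact: le_trans zq.
by rewrite lef_pV2 ?posrE ?subr_gt0 // lerB.
Qed.

Lemma hyp3F2_limit_dist_uniform (R : realType) (bb q be x t : R) (N : nat) :
  0 < bb -> bb <= be <= 1 -> 0 <= x -> limit_ratio be x <= q -> q < 1 -> 1 <= t ->
  `| hyp3F2 1 (t * ((1 + be) / 2) + 1) (t * ((1 + be) / 2) + 2^-1)
            (t + 1) (t * be + 1) x - (1 - limit_ratio be x)^-1 |
  <= q ^+ N / (1 - q) + N%:R ^+ 2 * (N%:R * (N%:R + 2)) / bb / t.
Proof.
move=> bb0 /andP[bbe be1] x0 zq q1 t1.
have be0 : 0 < be := lt_le_trans bb0 bbe.
have t0 : 0 < t by lra.
have N0 : 0 <= N%:R :> R by [].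
apply: le_trans (hyp3F2_limit_dist N _ x0 (le_lt_trans zq q1) t1) _; first by rewrite be0.
apply: lerD; first by apply: geometric_tail_le; rewrite ?limit_ratio_ge0.
have -> : N%:R ^+ 2 * (N%:R * (N%:R + 2) / (t * be)) =
          N%:R ^+ 2 * (N%:R * (N%:R + 2)) / be / t by field; rewrite !gt_eqF.
rewrite ler_pM2r ?invr_gt0 //; apply: ler_wpM2l; last by rewrite lef_pV2 ?posrE.
by rewrite mulr_ge0 ?exprn_ge0 //; lra.
Qed.

Lemma geometric_tail_lt (R : realType) (q e : R) : 0 <= q -> q < 1 -> 0 < e ->
  exists N, q ^+ N / (1 - q) < e.
Proof.
move=> q0 q1 e0.
have q1' : `|q| < 1 by rewrite ger0_norm.
have e'0 : 0 < e * (1 - q) by rewrite mulr_gt0 ?subr_gt0.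
have [N _ qN] := cvgr0_norm_lt _ (cvg_expr q1') _ e'0.
exists N; rewrite ltr_pdivrMr ?subr_gt0 //.
by have := qN N (leqnn N); rewrite /= ger0_norm ?exprn_ge0.
Qed.

Definition region (R : realType) : set (R * R) :=
  [set p | 0 < p.1 <= 1 /\ 0 <= limit_ratio p.1 p.2 < 1].

Lemma limit_ratio_continuous (R : realType) (p : R * R) : p.1 != 0 ->
  {for p, continuous (fun q : R * R => limit_ratio q.1 q.2)}.
Proof.
move=> p0; rewrite /limit_ratio.
apply: cvgM; last by apply: cvgV; [rewrite mulf_neq0 ?pnatr_eq0 | exact: cvgMr cvg_fst].
apply: cvgM; last exact: cvg_snd.
have cvg_1Dfst : (fun q : R * R => 1 + q.1) @ p --> 1 + p.1.
  by apply: cvgD; [exact: cvg_cst | exact: cvg_fst].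
exact: (cvgM cvg_1Dfst cvg_1Dfst).
Qed.

Lemma compact_region_bounds (R : realType) (K : set (R * R)) :
  compact K -> K `<=` @region R ->
  exists bb q : R, [/\ 0 < bb, 0 <= q, q < 1 &
    forall p, K p -> bb <= p.1 /\ limit_ratio p.1 p.2 <= q].
Proof.
move=> cK sK; have [K0|K0] := pselect (K !=set0); last first.
  by exists 1, 0; split=> // p Kp; case: K0; exists p.
have fst_cont : {within K, continuous (fun p : R * R => p.1)}.
  by apply: continuous_subspaceT => p; exact: cvg_fst.
have z_cont : {within K, continuous (fun p : R * R => limit_ratio p.1 p.2)}.
  apply: continuous_in_subspaceT => p /set_mem /sK [/andP[p0 _] _].
  by apply: limit_ratio_continuous; rewrite gt_eqF.
have [pmin /set_mem Kmin minP] := compact_EVT_min K0 cK fst_cont.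
have [pmax /set_mem Kmax maxP] := compact_EVT_max K0 cK z_cont.
have [/andP[b0 _] _] := sK _ Kmin; have [_ /andP[z0 z1]] := sK _ Kmax.
exists pmin.1, (limit_ratio pmax.1 pmax.2); split=> // p /mem_set Kp.
by split; [exact: minP | exact: maxP].
Qed.

Theorem corollary1 (R : realType) (K : set (R * R)) :
  compact K ->
  K `<=` [set p : R * R | 0 < p.1 <= 1 /\
           0 <= (1 + p.1) ^+ 2 * p.2 / (4 * p.1) < 1] ->
  forall eps : R, 0 < eps ->
  exists T : R, 0 < T /\ forall t : R, T < t -> forall p : R * R, K p ->
    `| hyp3F2 1 (t * ((1 + p.1) / 2) + 1) (t * ((1 + p.1) / 2) + 2^-1)
              (t + 1) (t * p.1 + 1) p.2
       - (1 - (1 + p.1) ^+ 2 * p.2 / (4 * p.1))^-1 | < eps.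
Proof.
move=> cK sK eps eps0.
have [bb [q [bb0 q0 q1 Kbq]]] := compact_region_bounds cK sK.
have [N qN] := geometric_tail_lt q0 q1 (divr_gt0 eps0 (ltr0Sn _ 1)).
pose C : R := N%:R ^+ 2 * (N%:R * (N%:R + 2)) / bb.
have C0 : 0 <= C.
  have N0 : 0 <= N%:R :> R by [].
  by rewrite /C divr_ge0 ?(ltW bb0) ?mulr_ge0 ?exprn_ge0 //; lra.
have Ceps0 : 0 <= 2 * C / eps by rewrite divr_ge0 ?(ltW eps0) // mulr_ge0.
exists (2 * C / eps + 1); split=> [|t tT p Kp]; first lra.
have [/andP[be0 be1] /andP[z0 z1]] : region p := sK p Kp.
have [bbp zq] := Kbq p Kp.
have t0 : 0 < t by lra.
have x0 : 0 <= p.2 by rewrite -(limit_ratio_ge0 p.2 be0).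
apply: le_lt_trans (hyp3F2_limit_dist_uniform N bb0 _ x0 zq q1 _) _.
- by rewrite bbp be1.
- lra.
have tC : 2 * C < t * eps by rewrite -ltr_pdivrMr //; lra.
have : C / t < eps / 2 by rewrite ltr_pdivrMr //; lra.
rewrite -/C; lra.
Qed.
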